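(* Let $p(n)$ be the number of (unrestricted) partitions of $n$. For $k\ge1$ let $\Omega_k(j)$ ($j\ge0$) be the coefficients of $A_k(q)=\dfrac{(1-q^k)^k}{\prod_{i=1}^{k}(1-q^i)}=\sum_{j\ge0}\Omega_k(j)q^j$, and for $n\ge 1$ put $n_k=n-k$ and $$\Phi_k(n)=\sum_{m=0}^{\lfloor n_k/k\rfloor}\Omega_k(n_k-mk)\binom{m+k-1}{k-1}$$ (an empty sum, hence $0$, when $n_k<0$). Then for every integer $n\ge1$, $$p(n)=\sum_{k=1}^{n}\Phi_k(n).$$ *)

From mathcomp Require Import all_boot all_order all_algebra.
Set Implicit Arguments. Unset Strict Implicit. Unset Printing Implicit Defensive.
Import GRing.Theory Num.Theory.
Local Open Scope ring_scope.

(* A partition of n is represented, in the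
   standard padded form, as a nonincreasing n-tuple of naturals in [0, n]
   whose sum is n (the nonzero entries are the parts). *)
Definition npart (n : nat) : nat :=
  #|[set t : n.-tuple 'I_n.+1 |
      sorted geq [seq val x | x <- t] && ((\sum_(x <- t) val x)%N == n)]|.

(* Each factor 1/(1-q^i) is the geometric series sum_{t>=0} q^(i t); for the
   coefficient of q^j it suffices to truncate it at t <= j, so we take the
   j-th coefficient of the polynomial
   (1 - X^k)^k * prod_{i=1}^k sum_{t=0}^j X^(i t). *)
Definition Omega (k j : nat) : int :=
  (((1 - 'X^k) ^+ k * \prod_(1 <= i < k.+1) \sum_(0 <= t < j.+1) 'X^(i * t))
     : {poly int})`_j.

Definition Phi (k n : nat) : int :=
  if (n < k)%N then 0 else
  \sum_(0 <= m < ((n - k) %/ k).+1)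
     Omega k ((n - k) - m * k)%N * ('C(m + k - 1, k - 1))%:R.

From mathcomp Require Import all_boot all_order all_algebra.
From mathcomp Require Import ring.
Set Implicit Arguments. Unset Strict Implicit. Unset Printing Implicit Defensive.

(* Classifying the partitions of n by their largest part k gives
   p(n) = sum_k q_k(n - k), where q_k(j) counts the partitions of j into parts
   at most k.  Their generating function is
   prod_(i <= k) (1 - q^i)^-1 = A_k(q) (1 - q^k)^-k, and expanding
   (1 - q^k)^-k = sum_m C(m+k-1, k-1) q^(mk) shows that Phi_k(n) is its
   coefficient of q^(n-k), i.e. q_k(n - k).  All series are handled as
   polynomials truncated beyond the degree of interest. *)

Lemma geq_trans : transitive geq.
Proof. exact: rev_trans leq_trans. Qed.

Lemma geq_anti : antisymmetric geq.
Proof. by move=> x y; rewrite andbC => /anti_leq. Qed.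

Fixpoint bpart (k j : nat) : seq (seq nat) :=
  if k is k'.+1 then
    [seq nseq t k ++ s | t <- iota 0 (j %/ k).+1, s <- bpart k' (j - t * k)]
  else if j == 0 then [:: [::]] else [::].

Lemma bpartS k j : bpart k.+1 j =
  [seq nseq t k.+1 ++ s | t <- iota 0 (j %/ k.+1).+1, s <- bpart k (j - t * k.+1)].
Proof. by []. Qed.

Definition is_bpart (k j : nat) (s : seq nat) :=
  [&& sorted geq s, all (fun x => 0 < x <= k) s & sumn s == j].

Lemma sorted_nseq_cat t a s :
  sorted geq s -> all (fun x => x <= a) s -> sorted geq (nseq t a ++ s).
Proof.
rewrite !(sorted_pairwise geq_trans) pairwise_cat => -> s_le; rewrite andbT.
apply/andP; split.
- by apply/allrelP => x y /nseqP [-> _] /(allP s_le).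
- by elim: t => //= t ->; rewrite andbT; apply/allP => y /nseqP [-> _] /=.
Qed.

Lemma sorted_geq_split_max a s : sorted geq s -> all (fun x => x <= a.+1) s ->
  exists t s', s = nseq t a.+1 ++ s' /\ all (fun x => x <= a) s'.
Proof.
elim: s => [|x s IH] /=; first by exists 0, [::].
move=> xs_sorted /andP [x_le s_le].
case: (ltngtP x a.+1) => [x_lt||->]; last 2 first.
- by rewrite ltnNge x_le.
- have [t [s' [-> s'_le]]] := IH (path_sorted xs_sorted) s_le.
  by exists t.+1, s'.
exists 0, (x :: s); split => //=; rewrite -ltnS x_lt /=.
apply/allP => y /(allP (order_path_min geq_trans xs_sorted)) /= y_le.
by rewrite -ltnS (leq_ltn_trans y_le).
Qed.

Lemma is_bpart_nseq_cat k j t s : t * k.+1 <= j ->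
  is_bpart k (j - t * k.+1) s -> is_bpart k.+1 j (nseq t k.+1 ++ s).
Proof.
move=> le_tj /and3P [s_sorted s_range /eqP s_sum]; apply/and3P; split.
- apply: sorted_nseq_cat => //; apply/allP => x /(allP s_range) /andP [_].
  exact: leqW.
- rewrite all_cat; apply/andP; split; apply/allP => x.
  + by move=> /nseqP [-> _] /=.
  + by move=> /(allP s_range) /andP [-> /leqW].
- by rewrite sumn_cat sumn_nseq s_sum mulnC subnKC.
Qed.

Lemma is_bpartS_split k j s : is_bpart k.+1 j s -> exists t s',
  [/\ s = nseq t k.+1 ++ s', t * k.+1 <= j & is_bpart k (j - t * k.+1) s'].
Proof.
move=> /and3P [s_sorted s_range /eqP s_sum].
have s_le : all (fun x => x <= k.+1) s by apply/allP => x /(allP s_range) /andP [].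
have [t [s' [s_def s'_le]]] := sorted_geq_split_max s_sorted s_le.
have sum_def : t * k.+1 + sumn s' = j by rewrite -s_sum s_def sumn_cat sumn_nseq mulnC.
exists t, s'; split => //; first by rewrite -sum_def leq_addr.
apply/and3P; split.
- by move: s_sorted; rewrite s_def => /cat_sorted2 [].
- apply/allP => x x_s'; rewrite (allP s'_le x x_s') andbT.
  have x_s : x \in s by rewrite s_def mem_cat x_s' orbT.
  by have /andP [] := allP s_range x x_s.
- by rewrite -sum_def addKn.
Qed.

Lemma mem_bpart k j s : (s \in bpart k j) = is_bpart k j s.
Proof.
elim: k j s => [|k IH] j s.
  by case: j => [|j]; case: s => [|[|x] s]; rewrite /is_bpart /= ?andbF.
rewrite bpartS; apply/allpairsPdep/idP => [[t [s' [t_range s'_bpart ->]]]|].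
  apply: is_bpart_nseq_cat; last by rewrite -IH.
  by move: t_range; rewrite mem_iota ltnS leq_divRL.
move=> /is_bpartS_split [t [s' [-> le_tj s'_bpart]]].
by exists t, s'; rewrite mem_iota ltnS leq_divRL // IH.
Qed.

Lemma count_mem_nseq_cat t a s :
  all (fun x => x < a) s -> count_mem a (nseq t a ++ s) = t.
Proof.
move=> s_lt; rewrite count_cat count_nseq /= eqxx mul1n -[RHS]addn0.
congr (_ + _); apply/eqP; rewrite eqn0Ngt -has_count.
by apply/hasPn => x /(allP s_lt) x_lt; rewrite /= ltn_eqF.
Qed.

Lemma uniq_bpart k j : uniq (bpart k j).
Proof.
elim: k j => [|k IH] j; first by rewrite /=; case: (j == 0).
rewrite bpartS; apply: (@allpairs_uniq_dep _ (fun=> _)) => [|t _|].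
- exact: iota_uniq.
- exact: IH.
have lt_parts t s : s \in bpart k (j - t * k.+1) -> all (fun x => x < k.+1) s.
  rewrite mem_bpart => /and3P [_ /allP s_range _].
  by apply/allP => x /s_range /andP [].
move=> _ _ /allpairsPdep [t1 [s1 [_ s1_bpart ->]]]
  /allpairsPdep [t2 [s2 [_ s2_bpart ->]]] /= eq12.
have eq_t : t1 = t2.
  rewrite -(count_mem_nseq_cat t1 (lt_parts _ _ s1_bpart)) eq12.
  by rewrite count_mem_nseq_cat // (lt_parts t2).
by move: eq12; rewrite eq_t => /eqP; rewrite eqseq_cat // => /andP [_ /eqP ->].
Qed.

Lemma size_bpartS k j :
  size (bpart k.+1 j) = \sum_(0 <= t < (j %/ k.+1).+1) size (bpart k (j - t * k.+1)).
Proof. by rewrite bpartS size_allpairs_dep sumnE big_map /index_iota subn0. Qed.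

Lemma size_bpartSr k j : size (bpart k.+1 j) =
  size (bpart k j) + (if k < j then size (bpart k.+1 (j - k.+1)) else 0).
Proof.
rewrite size_bpartS big_nat_recl // mul0n subn0; congr (_ + _).
case: ltnP => [lt_kj|le_jk]; last by rewrite divn_small ?ltnS // big_geq.
rewrite size_bpartS -{1}(subnK lt_kj) divnDr // divnn addn1 /=.
by apply: eq_bigr => t _; rewrite mulSn subnDA.
Qed.

Lemma size_bpart_largest_part K j : size (bpart K j) =
  (j == 0) + \sum_(0 <= k < K | k < j) size (bpart k.+1 (j - k.+1)).
Proof.
elim: K => [|K IH]; first by rewrite big_geq /= ?addn0; case: (j == 0).
by rewrite size_bpartSr IH [in RHS]big_mkcond big_nat_recr //= -big_mkcond addnA.
Qed.

Definition pos_parts (s : seq nat) := [seq x <- s | 0 < x].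

Lemma sorted_cat_nseq0 s m : sorted geq s -> sorted geq (s ++ nseq m 0).
Proof.
rewrite !(sorted_pairwise geq_trans) pairwise_cat => -> /=.
apply/andP; split; first by apply/allrelP => x y _ /nseqP [-> _].
by elim: m => //= m ->; rewrite andbT; apply/allP => y /nseqP [-> _].
Qed.

Lemma sorted_pos_parts_nseq0 s : sorted geq s ->
  s = pos_parts s ++ nseq (size s - size (pos_parts s)) 0.
Proof.
move=> s_sorted; apply: (sorted_eq geq_trans geq_anti) => //.
  exact/sorted_cat_nseq0/(sorted_filter geq_trans).
rewrite -(perm_filterC (fun x => 0 < x) s) perm_cat2l.
have /all_pred1P -> : all (pred1 0) [seq x <- s | ~~ (0 < x)].
  by apply/allP => x; rewrite mem_filter -eqn0Ngt => /andP [].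
by rewrite !size_filter -(count_predC (fun x => 0 < x) s) addKn.
Qed.

Lemma sumn_pos_parts s : sumn (pos_parts s) = sumn s.
Proof. by elim: s => [|[|x] s IH] //=; rewrite IH. Qed.

Lemma pos_parts_cat_nseq0 s m :
  all (fun x => 0 < x) s -> pos_parts (s ++ nseq m 0) = s.
Proof.
by move=> /all_filterP s_pos; rewrite /pos_parts filter_cat s_pos filter_nseq cats0.
Qed.

Lemma is_bpart_pos_parts k s : sorted geq s -> all (fun x => x <= k) s ->
  is_bpart k (sumn s) (pos_parts s).
Proof.
move=> s_sorted s_le; apply/and3P; split; last by rewrite sumn_pos_parts.
  exact: (sorted_filter geq_trans).
by apply/allP => x; rewrite mem_filter => /andP [-> /(allP s_le)].
Qed.

Lemma is_bpart_size_le k j s : is_bpart k j s -> size s <= j.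
Proof.
move=> /and3P [_ s_range /eqP <-]; elim: s s_range => //= x s IH /andP [/andP [x_gt0 _]].
by move=> /IH; rewrite -add1n; apply: leq_add.
Qed.

Lemma npart_bpart n : npart n = size (bpart n n).
Proof.
pose parts (t : n.-tuple 'I_n.+1) := pos_parts [seq val x | x <- t].
rewrite /npart cardE -(size_map parts); apply/perm_size/uniq_perm.
- rewrite map_inj_in_uniq ?enum_uniq // => t1 t2.
  rewrite !mem_enum !inE => /andP [t1_sorted _] /andP [t2_sorted _] eq12.
  apply/val_inj/(inj_map val_inj).
  rewrite (sorted_pos_parts_nseq0 t1_sorted) (sorted_pos_parts_nseq0 t2_sorted).
  by rewrite [pos_parts _]eq12 !size_map !size_tuple.
- exact: uniq_bpart.
move=> s; rewrite mem_bpart; apply/mapP/idP => [[t]|s_bpart].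
  rewrite mem_enum inE => /andP [t_sorted /eqP t_sum] ->.
  rewrite /parts -{2}t_sum -(big_map val xpredT id) -sumnE.
  apply: is_bpart_pos_parts => //.
  by apply/allP => _ /mapP [x _ ->]; rewrite -ltnS ltn_ord.
have /and3P [s_sorted s_range /eqP s_sum] := s_bpart.
pose u := s ++ nseq (n - size s) 0.
have size_u : size (map (@inord n) u) == n.
  by rewrite size_map size_cat size_nseq subnKC // (is_bpart_size_le s_bpart).
have val_u : [seq val x | x <- map (@inord n) u] = u.
  rewrite -map_comp map_id_in // => x; rewrite mem_cat.
  by move=> /orP [/(allP s_range) /andP [_ x_le]|/nseqP [-> _]]; rewrite /= inordK.
exists (Tuple size_u); last first.
  rewrite /parts val_u pos_parts_cat_nseq0 //.
  by apply/allP => x /(allP s_range) /andP [].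
rewrite mem_enum inE val_u sorted_cat_nseq0 //=.
by rewrite -(big_map val xpredT id) -sumnE val_u sumn_cat sumn_nseq s_sum addn0.
Qed.

Import GRing.Theory.
Local Open Scope ring_scope.

Section BinomialSeries.

Variable R : comRingType.
Implicit Types Y : R.

Definition binomial_series Y k M := \sum_(0 <= m < M.+1) Y ^+ m * 'C(m + k, k)%:R.

Lemma mul1B_binomial_series0 Y M : (1 - Y) * binomial_series Y 0 M = 1 - Y ^+ M.+1.
Proof.
rewrite /binomial_series; under eq_bigr do rewrite addn0 bin0 mulr1.
by rewrite big_mkord -[RHS]opprB subrX1 -mulNr opprB.
Qed.

Lemma mul1B_binomial_seriesS Y k M : (1 - Y) * binomial_series Y k.+1 M =
  binomial_series Y k M - Y ^+ M.+1 * 'C(M + k.+1, k.+1)%:R.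
Proof.
rewrite /binomial_series; elim: M => [|M IH].
  by rewrite !big_nat1 expr0 expr1 !add0n !binn mul1r; ring.
have pascal : 'C(M.+1 + k.+1, k.+1) = ('C(M + k.+1, k.+1) + 'C(M.+1 + k, k))%N.
  by rewrite [in LHS]addnS binS addSnnS.
rewrite big_nat_recr //= mulrDr IH [in RHS]big_nat_recr //= pascal natrD !exprS.
ring.
Qed.

Lemma binomial_seriesP Y k M :
  exists r, (1 - Y) ^+ k.+1 * binomial_series Y k M = 1 + r * Y ^+ M.+1.
Proof.
elim: k => [|k [r IH]].
  by exists (-1); rewrite expr1 mul1B_binomial_series0 mulN1r.
exists (r - (1 - Y) ^+ k.+1 * 'C(M + k.+1, k.+1)%:R).
by rewrite exprS -mulrA mulrCA mul1B_binomial_seriesS mulrBr IH; ring.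
Qed.

End BinomialSeries.

Section PartitionPoly.

Variable R : comRingType.

Definition partition_poly N k : {poly R} :=
  \prod_(1 <= i < k.+1) \sum_(0 <= t < N.+1) 'X^(i * t).

Lemma coef_partition_poly N k j :
  (j <= N)%N -> (partition_poly N k)`_j = (size (bpart k j))%:R.
Proof.
elim: k j => [|k IH] j le_jN.
  by rewrite /partition_poly big_geq // coef1; case: j {le_jN}.
rewrite /partition_poly big_nat_recr //= -/(partition_poly N k) mulr_sumr coef_sum.
rewrite size_bpartS natr_sum.
have le_tN : ((j %/ k.+1).+1 <= N.+1)%N by rewrite ltnS (leq_trans (leq_div _ _)).
rewrite (big_cat_nat (leq0n _) le_tN) /= [X in _ + X]big1_seq ?addr0.
  apply: eq_big_nat => t /andP [_]; rewrite ltnS leq_divRL // => le_tj.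
  by rewrite coefMXn mulnC ltnNge le_tj /= IH // (leq_trans (leq_subr _ _)).
move=> t /andP [_]; rewrite mem_index_iota => /andP [+ _].
by rewrite ltnNge leq_divRL // -ltnNge => lt_jt; rewrite coefMXn mulnC lt_jt.
Qed.

Lemma partition_poly_trunc N j k : (j <= N)%N ->
  exists r, partition_poly N k = partition_poly j k + r * 'X^(j.+1).
Proof.
move=> le_jN; elim: k => [|k [r IH]].
  by exists 0; rewrite /partition_poly !big_geq // mul0r addr0.
have [r' geom_trunc] : exists r', \sum_(0 <= t < N.+1) 'X^(k.+1 * t) =
    \sum_(0 <= t < j.+1) 'X^(k.+1 * t) + r' * 'X^(j.+1) :> {poly R}.
  exists (\sum_(j.+1 <= t < N.+1) 'X^(k.+1 * t - j.+1)).
  rewrite (big_cat_nat (leq0n _) (_ : j.+1 <= N.+1)%N) //= mulr_suml.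
  congr (_ + _); apply: eq_big_nat => t /andP [lt_jt _].
  by rewrite -exprD subnK // (leq_trans lt_jt) // leq_pmull.
exists (r * \sum_(0 <= t < j.+1) 'X^(k.+1 * t) + partition_poly j k * r'
        + r * r' * 'X^(j.+1)).
rewrite /partition_poly big_nat_recr //= [in RHS]big_nat_recr //=.
by rewrite -!/(partition_poly _ k) IH geom_trunc; ring.
Qed.

End PartitionPoly.

Lemma Omega_partition_poly k i j : (i <= j)%N ->
  Omega k i = ((1 - 'X^k) ^+ k * partition_poly int j k)`_i.
Proof.
move=> le_ij; have [r ->] := partition_poly_trunc int k le_ij.
by rewrite mulrDr coefD mulrA coefMXn ltnSn addr0.
Qed.

Lemma Phi_bpart k n : (0 < k <= n)%N -> Phi k n = (size (bpart k (n - k)))%:R.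
Proof.
case: k => // k /andP [_ le_kn]; rewrite /Phi ltnNge le_kn /=.
set j := (n - k.+1)%N; set M := (j %/ k.+1)%N.
set G := (1 - 'X^(k.+1)) ^+ k.+1 * partition_poly int j k.+1.
have term_coef m : (0 <= m < M.+1)%N ->
    Omega k.+1 (j - m * k.+1) * 'C(m + k.+1 - 1, k.+1 - 1)%:R =
    (G * ('X^(k.+1) ^+ m * 'C(m + k, k)%:R))`_j.
  move=> /andP [_]; rewrite ltnS leq_divRL // => le_mj.
  rewrite (Omega_partition_poly _ (leq_subr _ _)) -/G addnS !subn1 /=.
  rewrite mulrA [in RHS]mulr_natr coefMn -mulr_natr -exprM coefMXn.
  by rewrite [(k.+1 * m)%N]mulnC ltnNge le_mj mul1r mulr_natr.
rewrite (eq_big_nat _ _ term_coef) -coef_sum -mulr_sumr -/(binomial_series _ k M).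
(* (1 - X^(k+1))^(k+1) inverts the binomial series modulo X^((k+1)(M+1)),
   a degree beyond j. *)
have [r Er] := binomial_seriesP ('X^(k.+1) : {poly int}) k M.
rewrite /G -mulrA mulrCA [X in _ * X]Er mulrDr mulr1 coefD mulrA -exprM coefMXn.
by rewrite mulnC ltn_ceil // addr0 coef_partition_poly.
Qed.

Unset Implicit Arguments.

Theorem theorem7p1 (n : nat) : (1 <= n)%N ->
  ((npart n)%:R : int) = \sum_(1 <= k < n.+1) Phi k n.
Proof.
move=> n_gt0; rewrite npart_bpart size_bpart_largest_part eqn0Ngt n_gt0 add0n.
rewrite natr_sum big_add1 /= big_nat_cond [RHS]big_nat_cond.
apply: eq_big => [k|k /andP [/andP [_ lt_kn] _]].
  by rewrite andbT andb_idr // => /andP [].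
by rewrite Phi_bpart.
Qed.
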